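(* Let $p$ be an odd prime. If $D$ is an injective $\mathbb{Z}_{(p)}$-module, then $UD=\mathrm{Hom}^{\mathrm{cts}}_{\mathbb{Z}_{(p)}}(A,D)$ is an injective object of the category of discrete $A$-modules. Hence the category of discrete $A$-modules has enough injectives.
   Context: $A$ is the ring of degree zero stable operations in $p$-local complex $K$-theory. Fix $q$ primitive mod $p^2$, $\Psi^q\in A$ the Adams operation, $q_i=q^{(-1)^i\lfloor i/2\rfloor}$, $\Theta_n(X)=\prod_{i=1}^n(X-q_i)$, $\Phi_n=\Theta_n(\Psi^q)$; every element of $A$ is uniquely a convergent sum $\sum_{n\ge0}a_n\Phi_n$ with $a_n\in\mathbb{Z}_{(p)}$, and $A_m=\{\sum_{n\ge m}a_n\Phi_n\}$. An $A$-module $M$ is discrete if each $x\in M$ satisfies $A_nx=0$ for some $n$; discrete $A$-modules form a full subcategory of $A$-modules. $\mathrm{Hom}^{\mathrm{cts}}_{\mathbb{Z}_{(p)}}(A,L)$ is the set of $\mathbb{Z}_{(p)}$-homomorphisms $A\to L$ whose kernel contains some $A_n$, an $A$-module via $(af)(t)=f(ta)$. *)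

From HB Require Import structures.
From mathcomp Require Import all_boot all_order all_algebra.
From mathcomp Require Import boolp classical_sets functions.
Set Implicit Arguments. Unset Strict Implicit. Unset Printing Implicit Defensive.
Import Order.TTheory GRing.Theory Num.Theory.
Local Open Scope ring_scope.

(* Z_(p) : the p-local integers, as the subring of rat of fractions whose   *)
(* denominator can be chosen prime to p.                                    *)

Definition plocal (p : nat) : {pred rat} :=
  fun x => `[< exists n : nat, coprime n p /\ x * n%:R \is a Num.int >].

Lemma plocal_subring (p : nat) : subring_closed (plocal p).
Proof.
split.
- apply/asboolP; exists 1%N; split; first exact: coprime1n.
  by rewrite mul1r.
- move=> x y /asboolP [m [cm xm]] /asboolP [n [cn yn]].
  apply/asboolP; exists (m * n)%N; split; first by rewrite coprimeMl cm cn.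
  rewrite natrM mulrBl.
  have -> : x * (m%:R * n%:R) = (x * m%:R) * n%:R by rewrite mulrA.
  have -> : y * (m%:R * n%:R) = (y * n%:R) * m%:R by rewrite (mulrC m%:R) mulrA.
  by rewrite rpredB // rpredM // rpred_nat.
- move=> x y /asboolP [m [cm xm]] /asboolP [n [cn yn]].
  apply/asboolP; exists (m * n)%N; split; first by rewrite coprimeMl cm cn.
  rewrite natrM.
  have -> : x * y * (m%:R * n%:R) = (x * m%:R) * (y * n%:R).
    by rewrite -!mulrA; congr (_ * _); rewrite mulrCA.
  by rewrite rpredM.
Qed.

HB.instance Definition _ (p : nat) :=
  GRing.isSubringClosed.Build rat (plocal p) (plocal_subring p).

Record Zloc (p : nat) := MkZloc { zval : rat; _ : zval \in plocal p }.
HB.instance Definition _ p := [isSub for @zval p].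
HB.instance Definition _ p := [Choice of Zloc p by <:].
HB.instance Definition _ p := [SubChoice_isSubComNzRing of Zloc p by <:].


(* The nodes q_i = q^((-1)^i * floor(i/2)), i >= 1 (so q_1 = 1, q_2 = q,    *)
(* q_3 = q^-1, q_4 = q^2, ...), as rationals.                               *)

Definition qexp (i : nat) : int := if odd i then - (i./2)%:Z else (i./2)%:Z.
Definition qnode (q : int) (i : nat) : rat := (q%:~R : rat) ^ (qexp i).

Definition Theta (q : int) (n : nat) : {poly rat} :=
  \prod_(1 <= i < n.+1) ('X - (qnode q i)%:P).

Definition primitive_mod (q : int) (m : nat) : Prop :=
  forall k : nat, (0 < k)%N ->
    ((q ^+ k == 1 %[mod m%:Z])%Z <-> (totient m %| k)%N).

(* The ring A.  By the context, A = { sum_n a_n Phi_n : a_n in Z_(p) } with *)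
(* Phi_n = Theta_n(Psi^q), i.e. A is the completion lim_n Z_(p)[X]/Theta_n.*)
(* We realise A faithfully (as a topological ring) through the injective   *)
(* ring map a |-> (value of a at Psi^q = q_{k+1})_{k : nat}, i.e.           *)
(*    sum_n a_n Phi_n  |->  (k |-> sum_{n <= k} a_n Theta_n(q_{k+1})).      *)
(* Its image is the set of f : nat -> Z_(p) that, on the first n nodes, are *)
(* interpolated by a polynomial with Z_(p) coefficients, for every n.       *)
(* Under this identification Psi^q is k |-> q_{k+1}, Phi_n is               *)
(* k |-> Theta_n(q_{k+1}), and A_m = { sum_{n>=m} a_n Phi_n } is exactly    *)
(* the set of f in A vanishing on the first m nodes.         *)

Definition Apred (p : nat) (q : int) : {pred (nat -> Zloc p)} :=
  fun f => `[< forall n : nat, exists P : {poly Zloc p},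
      forall k : nat, (k < n)%N ->
        (map_poly (val : Zloc p -> rat) P).[qnode q k.+1] = val (f k) >].

Arguments Apred : clear implicits.

Lemma Apred_subring (p : nat) (q : int) : subring_closed (Apred p q).
Proof.
split.
- apply/asboolP => n; exists 1 => k _.
  rewrite rmorph1 hornerC.
  have -> : (1 : nat -> Zloc p) k = 1 by [].
  by rewrite rmorph1.
- move=> f g /asboolP Hf /asboolP Hg; apply/asboolP => n.
  have [P HP] := Hf n; have [Q HQ] := Hg n.
  exists (P - Q) => k kn.
  have -> : (f - g) k = f k - g k by [].
  by rewrite !rmorphB hornerD hornerN HP // HQ.
- move=> f g /asboolP Hf /asboolP Hg; apply/asboolP => n.
  have [P HP] := Hf n; have [Q HQ] := Hg n.
  exists (P * Q) => k kn.
  have -> : (f * g) k = f k * g k by [].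
  by rewrite !rmorphM hornerM HP // HQ.
Qed.

HB.instance Definition _ (p : nat) (q : int) :=
  GRing.isSubringClosed.Build (nat -> Zloc p) (Apred p q) (Apred_subring p q).

Record Aop (p : nat) (q : int) := MkAop { aval : nat -> Zloc p; _ : aval \in Apred p q }.
HB.instance Definition _ p q := [isSub for @aval p q].
HB.instance Definition _ p q := [Choice of Aop p q by <:].
HB.instance Definition _ p q := [SubChoice_isSubComNzRing of Aop p q by <:].




Section UDdef.
Variables (p : nat) (q : int).
Local Notation A := (Aop p q).
Local Notation Zp := (Zloc p).

Definition inAm (m : nat) (a : A) : Prop := forall k : nat, (k < m)%N -> val a k = 0.

Lemma cst_in_Apred (c : Zp) : (fun _ : nat => c) \in Apred p q.
Proof. by apply/asboolP => n; exists c%:P => k _; rewrite map_polyC hornerC. Qed.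

Definition cstA (c : Zp) : A := Sub (fun _ : nat => c) (cst_in_Apred c).

Variable D : lmodType Zp.

Definition zlinear (f : A -> D) : Prop :=
  forall (c : Zp) (t s : A), f (cstA c * t + s) = c *: f t + f s.

(* Hom^cts_{Z_(p)}(A, D): Z_(p)-linear maps whose kernel contains some A_n. *)
Definition ctsHom (f : A -> D) : Prop :=
  zlinear f /\ exists n : nat, forall t : A, inAm n t -> f t = 0.

Definition UDpred : {pred (A -> D)} := fun f => `[< ctsHom f >].

Lemma UDpred_zmod : zmod_closed UDpred.
Proof.
split.
- apply/asboolP; split.
    by move=> c t s; rewrite /= scaler0 addr0.
  by exists 0%N.
- move=> f g /asboolP [lf [n fn]] /asboolP [lg [m gm]]; apply/asboolP.
  have E : forall x, (f - g) x = f x - g x by [].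
  split.
    move=> c t s; rewrite !E lf lg scalerBr.
    by rewrite opprD addrACA.
  exists (maxn n m) => t tA; rewrite E fn ?gm ?subrr // => k km.
  + by apply: tA; apply: (leq_trans km); rewrite leq_maxr.
  + by apply: tA; apply: (leq_trans km); rewrite leq_maxl.
Qed.

HB.instance Definition _ := GRing.isZmodClosed.Build (A -> D) UDpred UDpred_zmod.

Record UD := MkUD { udval : A -> D; _ : udval \in UDpred }.
HB.instance Definition _ := [isSub for udval].
HB.instance Definition _ := [Choice of UD by <:].
HB.instance Definition _ := [SubChoice_isSubZmodule of UD by <:].

Lemma UDact_subproof (a : A) (f : UD) : (fun t : A => val f (t * a)) \in UDpred.
Proof.
case: f => f /= /asboolP [lf [n fn]]; apply/asboolP; split.
  by move=> c t s; rewrite mulrDl -mulrA lf.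
exists n => t tA; apply: fn => k kn.
have -> : val (t * a) k = val t k * val a k by [].
by rewrite tA // mul0r.
Qed.

Definition UDact (a : A) (f : UD) : UD :=
  Sub (fun t : A => val f (t * a)) (UDact_subproof a f).

Lemma UDactA (a b : A) (f : UD) : UDact a (UDact b f) = UDact (a * b) f.
Proof. by apply: val_inj; apply: funext => t /=; rewrite mulrA. Qed.

Lemma UDact1 : left_id 1 UDact.
Proof. by move=> f; apply: val_inj; apply: funext => t /=; rewrite mulr1. Qed.

Lemma UDactDr : right_distributive UDact +%R.
Proof. by move=> a f g; apply: val_inj; apply: funext => t. Qed.

Lemma UDactDl (f : UD) : {morph UDact^~ f : a b / a + b}.
Proof.
move=> a b; apply: val_inj; apply: funext => t /=.
case: f => f /= /asboolP [lf _].
have := lf 1 (t * a) (t * b).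
have -> : cstA 1 = 1 by apply: val_inj.
by rewrite mul1r scale1r mulrDr.
Qed.

HB.instance Definition _ :=
  GRing.Zmodule_isLmodule.Build A UD UDactA UDact1 UDactDr UDactDl.

End UDdef.

Arguments inAm : clear implicits.
Arguments UD : clear implicits.

Definition zp_injective (p : nat) (D : lmodType (Zloc p)) : Prop :=
  forall (M N : lmodType (Zloc p)) (i : {linear M -> N}) (f : {linear M -> D}),
    injective i -> exists g : {linear N -> D}, forall x : M, g (i x) = f x.

Definition discrete (p : nat) (q : int) (M : lmodType (Aop p q)) : Prop :=
  forall x : M, exists n : nat, forall a : Aop p q, inAm p q n a -> a *: x = 0.

Definition discrete_injective (p : nat) (q : int) (I : lmodType (Aop p q)) : Prop :=
  discrete I /\
  forall (M N : lmodType (Aop p q)), discrete M -> discrete N ->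
  forall (i : {linear M -> N}) (f : {linear M -> I}),
    injective i -> exists g : {linear N -> I}, forall x : M, g (i x) = f x.

Definition discrete_enough_injectives (p : nat) (q : int) : Prop :=
  forall M : lmodType (Aop p q), discrete M ->
    exists (I : lmodType (Aop p q)) (j : {linear M -> I}),
      injective j /\ discrete_injective I.

(* Restricted to discrete modules, [UD] is right adjoint to restriction of
   scalars along [Z_(p) -> A]: an [A]-linear map [N -> UD] amounts to the
   [Z_(p)]-linear map [N -> D] obtained by evaluating at [1]. So [UD] inherits
   injectivity from [D]. A discrete [M] embeds, as a [Z_(p)]-module, into
   [Hom_Z(Z_(p), Hom(M, Q/Z))], which is injective because [Q/Z] is divisible
   (Baer) and contains [M] because characters separate points; the adjoint of
   this embedding embeds [M] into an injective discrete module. *)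

From HB Require Import structures.
From mathcomp Require Import all_boot all_order all_algebra.
From mathcomp Require Import boolp classical_sets functions.
Set Implicit Arguments. Unset Strict Implicit. Unset Printing Implicit Defensive.
Import Order.TTheory GRing.Theory Num.Theory.
Local Open Scope ring_scope.
Local Open Scope classical_set_scope.

Lemma zmod_morphismD (U V : zmodType) (f : U -> V) :
  zmod_morphism f -> {morph f : x y / x + y}.
Proof. by move=> fB; exact: raddfD (HB.pack f (GRing.isZmodMorphism.Build _ _ f fB)). Qed.

Definition divisible (V : zmodType) :=
  forall (n : nat) (d : V), (0 < n)%N -> exists e, e *+ n = d.

Section PartialHom.
Variables (N E : zmodType).
Implicit Types (G : set (N * E)) (y x : N) (a b e : E).

Definition graph_functional G := forall x a b, G (x, a) -> G (x, b) -> a = b.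
Definition graph_subr_closed G :=
  forall x a y b, G (x, a) -> G (y, b) -> G (x - y, a - b).
Definition partial_hom G :=
  [/\ G (0, 0), graph_functional G & graph_subr_closed G].

Definition compatible G y e := forall j a, G (y *~ j, a) -> a = e *~ j.

Definition extend G y e : set (N * E) :=
  [set xa | exists x a k, G (x, a) /\ xa = (x + y *~ k, a + e *~ k)].

Section PartialHomTheory.
Variable G : set (N * E).
Hypothesis phomG : partial_hom G.

Let G0 : G (0, 0). Proof. by case: phomG. Qed.
Let Gfun : graph_functional G. Proof. by case: phomG. Qed.
Let GB : graph_subr_closed G. Proof. by case: phomG. Qed.

Lemma phomN x a : G (x, a) -> G (- x, - a).
Proof. by move=> Gxa; have := GB G0 Gxa; rewrite !sub0r. Qed.

Lemma phomD x a y b : G (x, a) -> G (y, b) -> G (x + y, a + b).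
Proof. by move=> Gx /phomN Gy; have := GB Gx Gy; rewrite !opprK. Qed.

Lemma phomMn x a n : G (x, a) -> G (x *+ n, a *+ n).
Proof.
by move=> Gx; elim: n => [|n IH]; rewrite ?mulr0n // !mulrS; apply: phomD.
Qed.

Lemma phomMz x a k : G (x, a) -> G (x *~ k, a *~ k).
Proof.
by case: k => n Gx; rewrite ?NegzE ?mulrNz; [|apply: phomN]; apply: phomMn.
Qed.

(* If [n0] is the least positive multiple of [y] in the domain of [G], every
   multiple of [y] in the domain is a multiple of [y *+ n0]. *)
Lemma compatible_of_min y n0 e : (0 < n0)%N -> G (y *+ n0, e *+ n0) ->
  (forall r, (0 < r < n0)%N -> ~ exists a, G (y *+ r, a)) -> compatible G y e.
Proof.
move=> n0_gt0 Gn0 n0_min j a Gj.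
have n0_neq0 : n0%:Z != 0 by rewrite eqz_nat -lt0n.
have Gk := phomMz (j %/ n0)%Z Gn0.
have Gr : G (y *~ (j %% n0)%Z, a - e *+ n0 *~ (j %/ n0)%Z).
  have -> : y *~ (j %% n0)%Z = y *~ j - y *+ n0 *~ (j %/ n0)%Z.
    rewrite pmulrn -mulrzA -mulrzBr; congr (_ *~ _).
    by rewrite [X in X - _](divz_eq j n0) [(_ %/ _)%Z * _]mulrC addrAC subrr add0r.
  exact: GB Gj Gk.
have r_eq0 : (j %% n0)%Z = 0.
  move: (modz_ge0 j n0_neq0) (ltz_mod j n0_neq0) Gr.
  case: (j %% n0)%Z => // -[|r] // _; rewrite ltz_nat => r_lt Gr.
  by case: (n0_min r.+1) => //; exists (a - e *+ n0 *~ (j %/ n0)%Z).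
have Ej : j = n0%:Z * (j %/ n0)%Z by rewrite mulrC {1}(divz_eq j n0) r_eq0 addr0.
by move: Gj; rewrite Ej !mulrzA -!pmulrn => /Gfun; apply.
Qed.

Lemma compatible_of_free y e :
  (forall n, (0 < n)%N -> ~ exists a, G (y *+ n, a)) -> compatible G y e.
Proof.
move=> free [[|n]|n] a Gj.
- by rewrite mulr0z; apply: Gfun G0.
- by case: (free n.+1) => //; exists a.
- case: (free n.+1) => //; exists (- a).
  by have := phomN Gj; rewrite NegzE mulrNz opprK.
Qed.

Lemma compatible_exists y (P : E -> Prop) : (exists e, P e) ->
  (forall n a, (0 < n)%N -> G (y *+ n, a) -> exists2 e, P e & e *+ n = a) ->
  exists2 e, P e & compatible G y e.
Proof.
move=> [e0 Pe0] Pmul.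
have [[n [n_gt0 [a Ga]]]|free] :=
  pselect (exists n, (0 < n)%N /\ exists a, G (y *+ n, a)); last first.
  by exists e0 => //; apply: compatible_of_free => n n_gt0 Gn; apply: free; exists n.
pose Q n := `[< (0 < n)%N /\ exists a, G (y *+ n, a) >].
have [|n0 /asboolP [n0_gt0 [a0 Ga0]] n0_min] := @ex_minnP Q.
  by exists n; apply/asboolP; split => //; exists a.
have [e Pe en0] := Pmul n0 a0 n0_gt0 Ga0.
exists e => //; apply: compatible_of_min n0_gt0 _ _; first by rewrite en0.
move=> r /andP [r_gt0 r_lt] Gr.
by have /n0_min := asboolT (conj r_gt0 Gr); rewrite leqNgt r_lt.
Qed.

Lemma divisible_compatible y : divisible E -> exists e, compatible G y e.
Proof.
move=> Ediv; have [e _ ?] := @compatible_exists y (fun=> True) (ex_intro _ 0 I)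
  (fun n a n_gt0 _ => let: ex_intro e en := Ediv n a n_gt0 in ex_intro2 _ _ e I en).
by exists e.
Qed.

Lemma extend_sub y e : G `<=` extend G y e.
Proof. by move=> [x a] Gx; exists x, a, 0; rewrite !mulr0z !addr0. Qed.

Lemma extend_y y e : extend G y e (y, e).
Proof. by exists 0, 0, 1; rewrite !mulr1z !add0r. Qed.

Lemma extend_phom y e : compatible G y e -> partial_hom (extend G y e).
Proof.
move=> ye; split; first exact: extend_sub.
- move=> z b c [x [a [k [Gx [-> ->]]]]] [x' [a' [k' [Gx' [Ez ->]]]]].
  have Ex : x - x' = y *~ (k' - k).
    by apply/eqP; rewrite subr_eq mulrzBr addrAC [_ + x']addrC -Ez addrK.
  have := GB Gx Gx'; rewrite Ex => /ye Ea.
  by rewrite -(subrK a' a) Ea mulrzBr addrAC subrK addrC.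
- move=> z b z' b' [x [a [k [Gx [-> ->]]]]] [x' [a' [k' [Gx' [-> ->]]]]].
  exists (x - x'), (a - a'), (k - k'); split; first exact: GB Gx Gx'.
  by rewrite !mulrzBr !opprD; congr (_, _); rewrite addrACA.
Qed.

End PartialHomTheory.

Lemma phom_chain_bigcup G0 (F : set (set (N * E))) : partial_hom G0 ->
  F `<=` (fun A => partial_hom (G0 `|` A)) -> total_on F subset ->
  partial_hom (G0 `|` \bigcup_(X in F) X).
Proof.
move=> phomG0 phomF chainF; set U := G0 `|` _.
have subU X : F X -> G0 `|` X `<=` U by move=> FX w [G0w|Xw]; [left|right; exists X].
have common u v : U u -> U v -> exists H, [/\ partial_hom H, H `<=` U, H u & H v].
  case=> [G0u|[X FX Xu]] [G0v|[Y FY Yv]].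
  - by exists G0; split => // w; left.
  - by exists (G0 `|` Y); split; [exact: phomF | exact: subU | left | right].
  - by exists (G0 `|` X); split; [exact: phomF | exact: subU | right | left].
  - have [XY|YX] := chainF X Y FX FY.
    + exists (G0 `|` Y); split; [exact: phomF | exact: subU | right | by right].
      exact: XY.
    + exists (G0 `|` X); split; [exact: phomF | exact: subU | by right | right].
      exact: YX.
split; first by left; case: phomG0.
- move=> x a b Ua Ub; have [H [[_ Hfun _] _ Ha Hb]] := common _ _ Ua Ub.
  exact: Hfun Ha Hb.
- move=> x a y b Ua Ub; have [H [[_ _ HB] HU Ha Hb]] := common _ _ Ua Ub.
  exact/HU/HB.
Qed.

(* Divisible groups are injective: a Zorn-maximal extension of [G0] is total by
   [divisible_compatible] and [extend_phom]. *)
Theorem divisible_phom_extend G0 : divisible E -> partial_hom G0 ->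
  exists2 g : N -> E, zmod_morphism g & forall x a, G0 (x, a) -> g x = a.
Proof.
move=> Ediv phomG0.
have [A [phomGA Amax]] := Zorn_bigcup (fun F => @phom_chain_bigcup G0 F phomG0).
set G := G0 `|` A in phomGA Amax.
have total y : exists a, G (y, a).
  apply: contrapT => noy.
  have [e ye] := divisible_compatible phomGA y Ediv.
  apply: (Amax (extend G y e)).
    split; first by move=> w Aw; apply: extend_sub; right.
    by move=> /(_ _ (extend_y phomGA y e)) Aye; apply: noy; exists e; right.
  rewrite setUidr; first exact: extend_phom.
  by move=> w G0w; apply: extend_sub; left.
have [g Gg] := choice total; have [_ Gfun GB] := phomGA.
exists g => [x y|x a G0x]; first exact: Gfun (Gg _) (GB _ _ _ _ (Gg x) (Gg y)).
exact: Gfun (Gg x) (or_introl G0x).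
Qed.

End PartialHom.

Definition fract (x : rat) : rat := x - (Num.floor x)%:~R.

Lemma fract_ge0 x : 0 <= fract x.
Proof. by rewrite subr_ge0 floor_le. Qed.

Lemma fract_lt1 x : fract x < 1.
Proof. by rewrite ltrBlDr addrC -[1]/(1%:~R) -intrD floorD1_gt. Qed.

Lemma fract_id x : 0 <= x < 1 -> fract x = x.
Proof. by move=> x01; rewrite /fract (@floor_def _ x 0) ?subr0. Qed.

Lemma fract0 : fract 0 = 0.
Proof. by rewrite fract_id // lexx ltr01. Qed.

Lemma fractDz x (k : int) : fract (x + k%:~R) = fract x.
Proof.
by rewrite /fract floorDrz ?intr_int // intrKfloor intrD opprD addrACA subrr addr0.
Qed.

Lemma fractDl x y : fract (fract x + y) = fract (x + y).
Proof.
have -> : fract x + y = x + y + (- Num.floor x)%:~R by rewrite /fract addrAC intrN.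
exact: fractDz.
Qed.

Lemma fractMn x n : fract (fract x *+ n) = fract (x *+ n).
Proof.
elim: n => [|n IH]; first by rewrite !mulr0n.
by rewrite !mulrS fractDl [x + _]addrC -fractDl IH fractDl addrC.
Qed.

(* [Q/Z], represented by the fractional parts in [0, 1). *)
Record QZ := MkQZ { qzv : rat; _ : (0 <= qzv) && (qzv < 1) }.
HB.instance Definition _ := [isSub for qzv].
HB.instance Definition _ := [Choice of QZ by <:].

Definition qz (x : rat) : QZ := MkQZ (introT andP (conj (fract_ge0 x) (fract_lt1 x))).

Lemma qzK (a : QZ) : qz (qzv a) = a.
Proof. by apply: val_inj; rewrite /= fract_id //; case: a. Qed.

Definition qz_add (a b : QZ) : QZ := qz (qzv a + qzv b).
Definition qz_opp (a : QZ) : QZ := qz (- qzv a).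

Lemma qz_addA : associative qz_add.
Proof.
by move=> a b c; apply: val_inj; rewrite /= fractDl addrC fractDl addrC addrA.
Qed.

Lemma qz_addC : commutative qz_add.
Proof. by move=> a b; apply: val_inj; rewrite /= addrC. Qed.

Lemma qz_add0 : left_id (qz 0) qz_add.
Proof. by move=> a; rewrite /qz_add /= fract0 add0r qzK. Qed.

Lemma qz_addN : left_inverse (qz 0) qz_opp qz_add.
Proof. by move=> a; apply: val_inj; rewrite /= fractDl addNr. Qed.

HB.instance Definition _ := GRing.isZmodule.Build QZ qz_addA qz_addC qz_add0 qz_addN.

Lemma qzvMn (a : QZ) n : qzv (a *+ n) = fract (qzv a *+ n).
Proof.
elim: n => [|n IH]; first by rewrite !mulr0n fract0.
by rewrite !mulrS /= IH [qzv a + _]addrC fractDl addrC.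
Qed.

Lemma qzvE (x : rat) : qzv (qz x) = fract x. Proof. by []. Qed.

Lemma QZ_divisible : divisible QZ.
Proof.
move=> n d n_gt0; exists (qz (qzv d / n%:R)); apply: val_inj => /=.
rewrite qzvMn qzvE fractMn -[X in fract X]mulr_natr divfK ?pnatr_eq0 -?lt0n //.
by rewrite fract_id //; case: d.
Qed.

Lemma QZ_torsion (n : nat) : (1 < n)%N -> exists2 e : QZ, e != 0 & e *+ n = 0.
Proof.
move=> n_gt1; have n_gt0 : (0 : rat) < n%:R by rewrite ltr0n ltnW.
have qzv_inv : qzv (qz n%:R^-1) = n%:R^-1.
  by rewrite qzvE fract_id // invr_ge0 ltW //= invf_lt1 // ltr1n.
exists (qz n%:R^-1).
  apply/eqP => /(congr1 qzv); rewrite qzv_inv /= fract0 => /eqP.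
  by rewrite invr_eq0 pnatr_eq0 => /eqP n0; rewrite n0 in n_gt1.
apply: val_inj => /=.
by rewrite qzvMn qzv_inv -[X in fract X]mulr_natr mulVf ?gt_eqF.
Qed.

(* Send [m] to a nonzero element of [QZ] whose order divides that of [m], and
   extend. *)
Lemma QZ_separates (M : zmodType) (m : M) : m != 0 ->
  exists2 g : M -> QZ, zmod_morphism g & g m != 0.
Proof.
move=> m_neq0; pose G0 : set (M * QZ) := [set (0, 0)].
have phomG0 : partial_hom G0.
  by split => [|x a b [_ ->] [_ ->]|x a y b [-> ->] [-> ->]] //; rewrite /G0 /= !subr0.
have [e e_neq0 me] : exists2 e, e != 0 & compatible G0 m e.
  apply: (compatible_exists (P := fun e => e != 0) phomG0).
    by have [e ? _] := QZ_torsion (isT : (1 < 2)%N); exists e.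
  move=> [|[|n]] a // _ [mn ->].
    by move: mn; rewrite mulr1n => /eqP; rewrite (negPf m_neq0).
  exact: QZ_torsion.
have [g g_morph gG] := divisible_phom_extend QZ_divisible (extend_phom phomG0 me).
by exists g; rewrite // (gG _ _ (extend_y phomG0 m e)).
Qed.

Definition mkLinear (R : pzRingType) (U V : lmodType R) (f : U -> V) (fL : linear f) :
  {linear U -> V} := HB.pack f (GRing.isLinear.Build R U V *:%R f fL).
Arguments mkLinear {R U V f}.

Definition injective_lmod (R : pzRingType) (I : lmodType R) :=
  forall (M N : lmodType R) (i : {linear M -> N}) (f : {linear M -> I}),
    injective i -> exists g : {linear N -> I}, forall x : M, g (i x) = f x.

Lemma divisible_fun (T : Type) (E : zmodType) : divisible E -> divisible (T -> E).
Proof.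
move=> Ediv n d n_gt0; have [e de] := choice (fun x => Ediv n (d x) n_gt0).
exists e; apply: funext => x.
have mulrnE (g : T -> E) k : (g *+ k) x = g x *+ k.
  by elim: k => [|k IH] //; rewrite !mulrS -IH.
by rewrite mulrnE.
Qed.

Section Coinduced.
Variables (R : pzRingType) (E : zmodType).

Definition coind_pred : {pred R -> E} := fun h => `[< zmod_morphism h >].

Lemma coind_zmod_closed : zmod_closed coind_pred.
Proof.
split; first by apply/asboolP => r s; rewrite subr0.
move=> f g /asboolP fB /asboolP gB; apply/asboolP => r s.
have subE x : (f - g) x = f x - g x by [].
by rewrite !subE fB gB !opprB [LHS]addrACA [RHS]addrACA [- g r + _]addrC.
Qed.

HB.instance Definition _ :=
  GRing.isZmodClosed.Build (R -> E) coind_pred coind_zmod_closed.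

Record coind := Coind { coind_val : R -> E; _ : coind_val \in coind_pred }.
HB.instance Definition _ := [isSub for coind_val].
HB.instance Definition _ := [Choice of coind by <:].
HB.instance Definition _ := [SubChoice_isSubZmodule of coind by <:].

Lemma coind_valB (h : coind) : zmod_morphism (coind_val h).
Proof. by case: h => h /= /asboolP. Qed.

Lemma coind_scale_subproof (c : R) (h : coind) :
  (fun r : R => coind_val h (r * c)) \in coind_pred.
Proof. by apply/asboolP => r s /=; rewrite mulrBl coind_valB. Qed.

Definition coind_scale (c : R) (h : coind) : coind :=
  Sub (fun r : R => coind_val h (r * c)) (coind_scale_subproof c h).

Lemma coind_scaleA a b (h : coind) :
  coind_scale a (coind_scale b h) = coind_scale (a * b) h.
Proof. by apply: val_inj; apply: funext => r /=; rewrite mulrA. Qed.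

Lemma coind_scale1 : left_id 1 coind_scale.
Proof. by move=> h; apply: val_inj; apply: funext => r /=; rewrite mulr1. Qed.

Lemma coind_scaleDr : right_distributive coind_scale +%R.
Proof. by move=> a f g; apply: val_inj; apply: funext. Qed.

Lemma coind_scaleDl (h : coind) : {morph coind_scale^~ h : a b / a + b}.
Proof.
move=> a b; apply: val_inj; apply: funext => r /=.
by rewrite mulrDr (zmod_morphismD (coind_valB h)).
Qed.

HB.instance Definition _ := GRing.Zmodule_isLmodule.Build R coind
  coind_scaleA coind_scale1 coind_scaleDr coind_scaleDl.

(* A map [N -> coind] is determined by its values at [1]; so it suffices to
   extend [M -> E, x |-> f x 1] additively along [i], which Baer allows. *)
Lemma coind_injective : divisible E -> injective_lmod coind.
Proof.
move=> Ediv M N i f i_inj.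
pose G0 : set (N * E) := [set xa | exists x, xa = (i x, coind_val (f x) 1)].
have phomG0 : partial_hom G0.
  split; first by exists 0; rewrite !linear0.
  - by move=> _ a b [x [-> ->]] [y [/i_inj <- ->]].
  - move=> _ _ _ _ [x [-> ->]] [y [-> ->]].
    by exists (x - y); rewrite !linearB.
have [g gB gG0] := divisible_phom_extend Ediv phomG0.
have gZ n : (fun r : R => g (r *: n)) \in coind_pred.
  by apply/asboolP => r s /=; rewrite scalerBl gB.
have gL : linear (fun n : N => Sub (fun r : R => g (r *: n)) (gZ n) : coind).
  move=> c n n'; apply: val_inj; apply: funext => r /=.
  by rewrite scalerDr scalerA (zmod_morphismD gB).
exists (mkLinear gL) => x; apply: val_inj; apply: funext => r /=.
rewrite -linearZ /= (gG0 _ (coind_val (f (r *: x)) 1)); last by exists (r *: x).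
by rewrite linearZ /= mul1r.
Qed.

End Coinduced.

Arguments coind : clear implicits.

(* [x] is sent to [r |-> (m |-> chi_m (r x))], with [chi_m] a character not
   vanishing at [m]. *)
Lemma lmod_embed_coind (R : pzRingType) (V : lmodType R) :
  exists e : {linear V -> coind R (V -> QZ)}, injective e.
Proof.
have chi_ex m : exists chi : V -> QZ, zmod_morphism chi /\ (m != 0 -> chi m != 0).
  have [->|m_neq0] := eqVneq m 0.
    by exists (fun=> 0); split => // x y; rewrite subr0.
  by have [chi ? ?] := QZ_separates m_neq0; exists chi.
have [chi chiP] := choice chi_ex.
have eZ x : (fun r : R => fun m => chi m (r *: x)) \in @coind_pred R (V -> QZ).
  by apply/asboolP => r s; apply: funext => m /=; rewrite scalerBl (chiP m).1.
have eL : linear (fun x : V => Sub (fun r : R => fun m => chi m (r *: x)) (eZ x)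
                                : coind R (V -> QZ)).
  move=> c x y; apply: val_inj; apply: funext => r; apply: funext => m /=.
  by rewrite scalerDr scalerA (zmod_morphismD (chiP m).1).
exists (mkLinear eL) => x y /(congr1 (fun h => coind_val h 1 (x - y))) /=.
rewrite !scale1r => chi_eq; apply/eqP; rewrite -subr_eq0; apply/negPn/negP.
by move=> /(chiP _).2; rewrite (chiP _).1 chi_eq subrr eqxx.
Qed.

Section DiscreteModules.
Variables (p : nat) (q : int).
Local Notation A := (Aop p q).
Local Notation Zp := (Zloc p).

Lemma cstA1 : cstA q (1 : Zp) = 1. Proof. exact: val_inj. Qed.
Lemma cstAD (a b : Zp) : cstA q (a + b) = cstA q a + cstA q b. Proof. exact: val_inj. Qed.
Lemma cstAM (a b : Zp) : cstA q (a * b) = cstA q a * cstA q b. Proof. exact: val_inj. Qed.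

Section Restriction.
Variable V : lmodType A.

Definition restr : Type := V.
HB.instance Definition _ := GRing.Zmodule.on restr.

Definition restr_scale (c : Zp) (v : restr) : restr := (cstA q c) *: (v : V).

Lemma restr_scaleA a b (v : restr) :
  restr_scale a (restr_scale b v) = restr_scale (a * b) v.
Proof. by rewrite /restr_scale scalerA cstAM. Qed.

Lemma restr_scale1 : left_id 1 restr_scale.
Proof. by move=> v; rewrite /restr_scale cstA1 scale1r. Qed.

Lemma restr_scaleDr : right_distributive restr_scale +%R.
Proof. by move=> a u v; rewrite /restr_scale scalerDr. Qed.

Lemma restr_scaleDl (v : restr) : {morph restr_scale^~ v : a b / a + b}.
Proof. by move=> a b; rewrite /restr_scale cstAD scalerDl. Qed.

HB.instance Definition _ := GRing.Zmodule_isLmodule.Build Zp restr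
  restr_scaleA restr_scale1 restr_scaleDr restr_scaleDl.

End Restriction.

Variable D : lmodType Zp.

Lemma UD_valZ (u : UD p q D) c t : udval u (cstA q c * t) = c *: udval u t.
Proof.
case: u => f /= /asboolP [fL _].
have f0 : f 0 = 0.
  by have := fL 1 0 0; rewrite mulr0 addr0 scale1r -{1}[f 0]addr0 => /addrI.
by have := fL c t 0; rewrite !addr0 f0 addr0.
Qed.

Lemma UD_adjunct (N : lmodType A) : discrete N -> forall psi : {linear restr N -> D},
  exists g : {linear N -> UD p q D}, forall y t, val (g y) t = psi (t *: y).
Proof.
move=> N_disc psi.
have gP (y : N) : (fun t : A => psi (t *: y)) \in @UDpred p q D.
  apply/asboolP; split.
    move=> c t s /=; rewrite scalerDl -scalerA.
    exact: (linearP psi c (t *: y : restr N) (s *: y : restr N)).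
  by have [n yn] := N_disc y; exists n => t /yn ->; apply: (linear0 psi).
have gL : linear (fun y : N => Sub (fun t : A => psi (t *: y)) (gP y) : UD p q D).
  move=> a y z; apply: val_inj; apply: funext => t /=.
  rewrite scalerDr scalerA.
  exact: (linearD psi ((t * a) *: y : restr N) (t *: z : restr N)).
by exists (mkLinear gL).
Qed.

Lemma UD_discrete : discrete (UD p q D).
Proof.
move=> [f fP]; have /asboolP [_ [n fn]] := fP; exists n => a an.
apply: val_inj; apply: funext => t /=; apply: fn => k kn.
by have -> : val (t * a) k = val t k * val a k by []; rewrite an ?mulr0.
Qed.

Lemma UD_discrete_injective : zp_injective D -> discrete_injective (UD p q D).
Proof.
move=> D_inj; split; first exact: UD_discrete.
move=> M N _ N_disc i f i_inj.
have phiL : linear (fun x : restr M => val (f x) 1).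
  move=> c x y; rewrite [c *: x](_ : _ = cstA q c *: (x : M)) // linearP /=.
  have addE (F G : A -> D) t : (F + G) t = F t + G t by [].
  by rewrite addE mul1r -[cstA q c]mulr1 UD_valZ.
have iL : linear (i : restr M -> restr N).
  by move=> c x y; exact: (linearP i (cstA q c) x y).
have [psi psiE] := D_inj _ _ (mkLinear iL) (mkLinear phiL) i_inj.
have [g gE] := UD_adjunct N_disc psi.
exists g => x; apply: val_inj; apply: funext => t.
by rewrite gE -linearZ psiE /= linearZ /= mul1r.
Qed.

End DiscreteModules.

Theorem corollary5p6 (p : nat) (q : int)
  (p_prime : prime p) (p_odd : odd p) (q_prim : primitive_mod q (p ^ 2))
  (D : lmodType (Zloc p)) (D_inj : zp_injective D) :
  discrete_injective (UD p q D) /\ discrete_enough_injectives p q.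
Proof.
split; first exact: UD_discrete_injective.
move=> M M_disc.
have [e e_inj] := lmod_embed_coind (restr M).
have [j jE] := UD_adjunct M_disc e.
exists (UD p q (coind (Zloc p) (restr M -> QZ))), j; split.
  by move=> x y /(congr1 (fun u => udval u 1)); rewrite !jE !scale1r; apply: e_inj.
exact/UD_discrete_injective/coind_injective/divisible_fun/QZ_divisible.
Qed.
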